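(* Let $k$ be an algebraically closed field of characteristic $p\ge0$, $n\ge1$, and let $\pi : \mathrm{GL}(n,k)\to\mathrm{PGL}(n,k)$ be the natural surjection. The map $\varpi : \mathrm{Hom}_{\mathrm{alg.gr}}(\mathbb{G}_a,\mathrm{GL}(n,k))\to\mathrm{Hom}_{\mathrm{alg.gr}}(\mathbb{G}_a,\mathrm{PGL}(n,k))$, $\varpi(\varphi) = \pi\circ\varphi$, is bijective.
   Context: $\mathbb{G}_a$ denotes the additive group of $k$; $\mathrm{Hom}_{\mathrm{alg.gr}}$ denotes the set of homomorphisms of algebraic groups. *)

From HB Require Import structures.
From mathcomp Require Import all_boot all_order all_algebra.
Set Implicit Arguments. Unset Strict Implicit. Unset Printing Implicit Defensive.
Import GRing.Theory.
Local Open Scope ring_scope.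

(* Over an algebraically closed (hence infinite) field k, algebraic varieties
   and morphisms are described classically by their k-points. *)

(* A regular function on the affine line A^1 = G_a : a polynomial function. *)
Definition polyfun (k : fieldType) (g : k -> k) : Prop :=
  exists p : {poly k}, forall s, g s = p.[s].

(* A morphism of varieties A^1 -> GL(n,k): the coordinate ring of GL_n is
   k[x_ij, 1/det]; the pullbacks of the x_ij and of 1/det must be regular. *)
Definition GL_morph (k : fieldType) (n : nat) (f : k -> 'M[k]_n) : Prop :=
  (forall s, \det (f s) != 0) /\
  (forall i j, polyfun (fun s => f s i j)) /\
  polyfun (fun s => (\det (f s))^-1).

Definition Hom_Ga_GL (k : fieldType) (n : nat) (f : k -> 'M[k]_n) : Prop :=
  GL_morph f /\ forall s t, f (s + t) = f s *m f t.

(* PGL(n,k) = GL(n,k) / k^*: two invertible matrices give the same point of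
   PGL(n,k) iff they are proportional. *)
Definition proj_eq (k : fieldType) (n : nat) (A B : 'M[k]_n) : Prop :=
  exists c : k, c != 0 /\ A = c *: B.

(* A map A^1 -> PGL(n,k), given by pointwise lifts f s in GL(n,k), is a
   morphism iff the pullbacks of the generators of the coordinate ring
   k[x_ij, 1/det]^{G_m} of PGL_n, namely (degree n monomial)/det, are regular.
   Every degree-n monomial in the x_ij is prod_(l<n) x_(a l)(b l). *)
Definition PGL_morph (k : fieldType) (n : nat) (f : k -> 'M[k]_n) : Prop :=
  (forall s, \det (f s) != 0) /\
  forall a b : 'I_n -> 'I_n,
    polyfun (fun s => (\prod_(l < n) f s (a l) (b l)) / \det (f s)).

(* Hom_{alg.gr}(G_a, PGL(n,k)), elements represented by lifts. *)
Definition Hom_Ga_PGL (k : fieldType) (n : nat) (f : k -> 'M[k]_n) : Prop :=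
  PGL_morph f /\ forall s t, proj_eq (f (s + t)) (f s *m f t).

From mathcomp Require Import all_boot all_order all_algebra.
From mathcomp Require Import ring.
From Stdlib Require Import FunctionalExtensionality.
Set Implicit Arguments. Unset Strict Implicit. Unset Printing Implicit Defensive.
Import GRing.Theory.
Local Open Scope ring_scope.

(* Write N for the size of the matrices. For a morphism f : G_a -> GL_N the
   determinant is a polynomial without zeros, hence constant, equal to 1; so the
   monomials over det are polynomials and f is a morphism to PGL_N. Two such
   lifts of the same map differ pointwise by an N-th root of unity; a ratio of
   polynomials taking only finitely many values is constant, and it is 1 at 0.
   Conversely, for g : G_a -> PGL_N fix (i,j) with g_ij(0) <> 0: the regular
   functions g_ab g_ij^(N-1) / det g form a polynomial matrix proportional to g
   wherever g_ij does not vanish. Dividing out the linear factors common to all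
   its entries gives a polynomial lift F, proportional to g at every point.
   Normalised by F(0) = 1 it has det F = 1, and F(s+t) = z F(s) F(t) with z an
   N-th root of unity, so z = 1 by the same constancy argument. *)

Section ClosedFieldPolynomials.
Variable k : closedFieldType.
Implicit Types p q r : {poly k}.

Lemma poly_eq_of_horner p q : (forall s, p.[s] = q.[s]) -> p = q.
Proof.
move=> pq; apply/eqP; rewrite -subr_eq0; apply: contraT => /closed_nonrootP[t].
by rewrite /root !hornerE pq subrr eqxx.
Qed.

Lemma poly_nonvanishing_const p : (forall s, p.[s] != 0) -> forall s, p.[s] = p.[0].
Proof.
move=> p_nz s; have [/eqP/size_poly1P[c _ ->]|] := eqVneq (size p) 1.
  by rewrite !hornerC.
by case/closed_rootP => t /eqP pt; have := p_nz t; rewrite pt eqxx.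
Qed.

Lemma poly_cover (ps : seq {poly k}) : (forall t, has (root^~ t) ps) -> 0 \in ps.
Proof.
move=> cover; have: \prod_(p <- ps) p == 0.
  apply/eqP; apply: poly_eq_of_horner => t; rewrite horner_prod horner0.
  by apply/eqP; rewrite prodf_seq_eq0; apply: sub_has (cover t).
by rewrite prodf_seq_eq0 => /hasP[p ps_p /eqP p0]; rewrite -p0.
Qed.

Lemma poly_ratio_const r p q : r != 0 ->
  (forall t, exists2 z, root r z & p.[t] = z * q.[t]) ->
  exists2 z, root r z & p = z *: q.
Proof.
move=> r_nz ratio; have [zs r_zs] := closed_field_poly_normal r.
have root_r z : root r z = (z \in zs).
  by rewrite r_zs rootZ ?lead_coef_eq0 // root_prod_XsubC.
have /mapP[z zs_z /eqP] : 0 \in [seq p - z *: q | z <- zs].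
  apply: poly_cover => t; have [z rz pq] := ratio t; apply/hasP.
  exists (p - z *: q); first by apply: map_f; rewrite -root_r.
  by rewrite /root !hornerE pq subrr.
by rewrite eq_sym subr_eq0 => /eqP pq; exists z; rewrite ?root_r.
Qed.

End ClosedFieldPolynomials.

Lemma mx_neq0P (R : nmodType) m m' (A : 'M[R]_(m, m')) :
  A != 0 -> exists i j, A i j != 0.
Proof.
move=> A_nz; have /existsP[i /existsP[j Aij]] : [exists i, exists j, A i j != 0].
  apply: contraR A_nz => /existsPn A0; apply/eqP/matrixP => i j.
  by move/existsPn: (A0 i) => /(_ j) /negPn /eqP ->; rewrite mxE.
by exists i, j.
Qed.

Section PolynomialMatrices.
Variable k : closedFieldType.

Definition evalmx m m' (P : 'M[{poly k}]_(m, m')) (s : k) : 'M[k]_(m, m') :=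
  map_mx (horner_eval s) P.

Lemma evalmxE m m' (P : 'M_(m, m')) s i j : evalmx P s i j = (P i j).[s].
Proof. by rewrite mxE. Qed.

Lemma det_evalmx m (P : 'M_m) s : \det (evalmx P s) = (\det P).[s].
Proof. exact: det_map_mx. Qed.

Lemma polyfun_family (I : finType) (g : I -> k -> k) :
  (forall i, polyfun (g i)) -> exists P : I -> {poly k}, forall i s, g i s = (P i).[s].
Proof. exact: (fin_all_exists (P := fun i q => forall s, g i s = q.[s])). Qed.

Lemma polyfun_mx m m' (f : k -> 'M[k]_(m, m')) :
  (forall i j, polyfun (fun s => f s i j)) -> exists P, f = evalmx P.
Proof.
move=> f_poly; have [P PE] := polyfun_family (fun ij : 'I_m * 'I_m' => f_poly ij.1 ij.2).
exists (\matrix_(i, j) P (i, j)); apply: functional_extensionality => s.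
by apply/matrixP => i j; rewrite evalmxE mxE -PE.
Qed.

Lemma evalmx_det_const m (P : 'M_m) :
  (forall s, \det (evalmx P s) != 0) -> forall s, \det (evalmx P s) = \det (evalmx P 0).
Proof.
move=> det_nz s; rewrite !det_evalmx; apply: poly_nonvanishing_const => t.
by rewrite -det_evalmx.
Qed.

Lemma polymx_eq_of_unity_ratio d m m' (P Q : 'M[{poly k}]_(m, m')) : (0 < d)%N ->
  (forall t, exists2 z, z ^+ d = 1 & evalmx P t = z *: evalmx Q t) ->
  evalmx P 0 = evalmx Q 0 -> evalmx P 0 != 0 -> P = Q.
Proof.
move=> d_gt0 ratio PQ0 /mx_neq0P[i [j]]; rewrite evalmxE => Pij0.
have ratioE t : exists2 z, z ^+ d = 1 & forall a b, (P a b).[t] = z * (Q a b).[t].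
  have [z zd PQt] := ratio t; exists z => // a b.
  by move/matrixP: PQt => /(_ a b); rewrite !mxE.
have [z _ Pij] : exists2 z, root ('X^d - 1) z & P i j = z *: Q i j.
  apply: poly_ratio_const; first by rewrite -size_poly_eq0 size_XnsubC.
  by move=> t; have [z zd PQt] := ratioE t; exists z; rewrite ?PQt // /root !hornerE zd subrr.
have Qij0 : (Q i j).[0] = (P i j).[0].
  by move/matrixP: PQ0 => /(_ i j); rewrite !evalmxE.
have z1 : z = 1.
  by apply: (mulIf Pij0); rewrite mul1r -{1}Qij0 -hornerZ -Pij.
have {Pij}Pij : P i j = Q i j by rewrite Pij z1 scale1r.
have Qij_nz : Q i j != 0 by rewrite -Pij; apply: contraNneq Pij0 => ->; rewrite horner0.
apply/matrixP => a b; apply: (mulIf Qij_nz); apply: poly_eq_of_horner => t.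
have [c _ PQt] := ratioE t; rewrite !hornerM PQt.
by rewrite mulrAC -PQt Pij mulrC.
Qed.

End PolynomialMatrices.

Section ProjectiveEquivalence.
Variable k : fieldType.

Lemma proj_eq_sym m (A B : 'M[k]_m) : proj_eq A B -> proj_eq B A.
Proof.
case=> c [c_nz ->]; exists c^-1; split; first by rewrite invr_neq0.
by rewrite scalerA mulVf // scale1r.
Qed.

Lemma proj_eq_trans m (A B C : 'M[k]_m) : proj_eq A B -> proj_eq B C -> proj_eq A C.
Proof.
case=> b [b_nz ->] [c [c_nz ->]]; exists (b * c); split; first exact: mulf_neq0.
by rewrite scalerA.
Qed.

Lemma proj_eq_mul m (A A' B B' : 'M[k]_m) :
  proj_eq A A' -> proj_eq B B' -> proj_eq (A *m B) (A' *m B').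
Proof.
case=> a [a_nz ->] [b [b_nz ->]]; exists (a * b); split; first exact: mulf_neq0.
by rewrite -scalemxAl -scalemxAr scalerA.
Qed.

Lemma proj_eq_det m (A B : 'M[k]_m) : proj_eq A B -> \det A = \det B -> \det B != 0 ->
  exists2 c, c ^+ m = 1 & A = c *: B.
Proof.
case=> c [_ AB] detAB detB_nz; exists c => //.
by apply: (mulIf detB_nz); rewrite mul1r -detZ -AB.
Qed.

Lemma proj_eq_idem_one n (A : 'M[k]_n.+1) :
  A \in unitmx -> proj_eq A (A *m A) -> proj_eq A 1.
Proof.
move=> A_unit [c [c_nz AAA]]; exists c^-1; split; first by rewrite invr_neq0.
have /(congr1 (mulmx (invmx A))) := AAA.
rewrite mulVmx // -scalemxAr mulKmx // => /(congr1 ( *:%R c^-1)).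
by rewrite scalerA mulVf // scale1r => <-.
Qed.

End ProjectiveEquivalence.

Section GLHomomorphisms.
Variables (k : closedFieldType) (n : nat).
Implicit Types f : k -> 'M[k]_n.+1.

Lemma Hom_Ga_GL_polymx f : Hom_Ga_GL f -> exists P, f = evalmx P.
Proof. by case=> [[_ [f_poly _]] _]; apply: polyfun_mx. Qed.

Lemma Hom_Ga_GL_at0 f : Hom_Ga_GL f -> f 0 = 1.
Proof.
case=> [[det_nz _] f_hom]; have f00 := f_hom 0 0; rewrite addr0 in f00.
have f0_unit : f 0 \in unitmx by rewrite unitmxE unitfE det_nz.
by rewrite -(mulKmx f0_unit (f 0)) -f00 mulVmx.
Qed.

Lemma Hom_Ga_GL_det f : Hom_Ga_GL f -> forall s, \det (f s) = 1.
Proof.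
move=> f_hom s; have [P fP] := Hom_Ga_GL_polymx f_hom.
have [[det_nz _] _] := f_hom; rewrite fP in det_nz *.
by rewrite evalmx_det_const // -fP Hom_Ga_GL_at0 // det1.
Qed.

Lemma Hom_Ga_GL_PGL f : Hom_Ga_GL f -> Hom_Ga_PGL f.
Proof.
move=> f_hom; have [P fP] := Hom_Ga_GL_polymx f_hom.
have det1 := Hom_Ga_GL_det f_hom.
split; [split|].
- by move=> s; rewrite det1 oner_neq0.
- move=> a b; exists (\prod_(l < n.+1) P (a l) (b l)) => s.
  by rewrite det1 divr1 horner_prod fP; apply: eq_bigr => l _; rewrite evalmxE.
- by move=> s t; exists 1; rewrite oner_neq0 scale1r; split=> //; apply: f_hom.2.
Qed.

Lemma Hom_Ga_GL_proj_inj f1 f2 : Hom_Ga_GL f1 -> Hom_Ga_GL f2 ->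
  (forall s, proj_eq (f1 s) (f2 s)) -> f1 = f2.
Proof.
move=> hom1 hom2 f12.
have [P1 f1P] := Hom_Ga_GL_polymx hom1; have [P2 f2P] := Hom_Ga_GL_polymx hom2.
rewrite f1P f2P; congr evalmx; apply: (@polymx_eq_of_unity_ratio _ n.+1) => //.
- move=> t; rewrite -f1P -f2P; apply: proj_eq_det => //.
    by rewrite !Hom_Ga_GL_det.
  by rewrite Hom_Ga_GL_det // oner_neq0.
- by rewrite -f1P -f2P !Hom_Ga_GL_at0.
- by rewrite -f1P Hom_Ga_GL_at0 // oner_neq0.
Qed.

End GLHomomorphisms.

Section MixedMonomials.
Variable n : nat.

Definition mixed_monomial (R : pzRingType) (A : 'M[R]_n.+1) (a b i j : 'I_n.+1) : R :=
  A a b * A i j ^+ n.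

Lemma proj_eq_of_mixed_monomial (k : fieldType) (A B : 'M[k]_n.+1) (c : k) :
  c != 0 -> B != 0 ->
  (forall a b i j, mixed_monomial A a b i j = c * mixed_monomial B a b i j) ->
  proj_eq A B.
Proof.
move=> c_nz /mx_neq0P[i [j Bij]] AB.
have Aij : A i j != 0.
  have := AB i j i j; rewrite /mixed_monomial -!exprS => ABij.
  have : A i j ^+ n.+1 != 0 by rewrite ABij mulf_neq0 ?expf_neq0.
  by rewrite expf_eq0.
exists (c * B i j ^+ n / A i j ^+ n); split; first by rewrite !mulf_neq0 ?invr_neq0 ?expf_neq0.
apply/matrixP => a b; rewrite mxE; apply: (mulIf (expf_neq0 n Aij)).
have := AB a b i j; rewrite /mixed_monomial => ->.
by field; rewrite expf_neq0.
Qed.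

Variables (k : closedFieldType) (m : 'I_n.+1 -> 'I_n.+1 -> 'I_n.+1 -> 'I_n.+1 -> {poly k}).
Hypothesis m_diag_nonroot : forall s, exists i j, ~~ root (m i j i j) s.

Definition mixed_factorization (H : {poly k}) (F : 'M[{poly k}]_n.+1) :=
  forall a b i j, mixed_monomial F a b i j = H * m a b i j.

Lemma mixed_factorization_root H F s0 : mixed_factorization H F -> root H s0 ->
  exists F' H', H = H' * ('X - s0%:P) ^+ n.+1 /\ mixed_factorization H' F'.
Proof.
move=> FH Hs0; set X0 := 'X - s0%:P.
have X0_F i j : X0 %| F i j.
  rewrite dvdp_XsubCl; have := FH i j i j; rewrite /mixed_monomial -exprS.
  move=> /(congr1 (horner^~ s0)); rewrite hornerM (rootP Hs0) mul0r horner_exp.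
  by move/eqP; rewrite expf_eq0.
pose F' := \matrix_(i, j) (F i j %/ X0).
have FF' i j : F i j = F' i j * X0 by rewrite mxE divpK.
have HmF' a b i j : H * m a b i j = mixed_monomial F' a b i j * X0 ^+ n.+1.
  by rewrite -FH /mixed_monomial !FF' exprMn exprS; ring.
have X0n_H : X0 ^+ n.+1 %| H.
  have [i0 [j0 m0]] := m_diag_nonroot s0.
  rewrite -(@Gauss_dvdpl _ _ (m i0 j0 i0 j0)); first by rewrite HmF' dvdp_mulIr.
  by apply: coprimep_expl; rewrite coprimep_sym coprimep_XsubC.
exists F', (H %/ X0 ^+ n.+1); split; first by rewrite divpK.
have X0_nz : X0 != 0 by rewrite polyXsubC_eq0.
move=> a b i j; apply: (mulIf (expf_neq0 n.+1 X0_nz)).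
by rewrite -HmF' -{1}(divpK X0n_H) mulrAC.
Qed.

Lemma mixed_factorization_const H F : H != 0 -> mixed_factorization H F ->
  exists F' c, c != 0 /\ mixed_factorization c%:P F'.
Proof.
elim: {H}(size H).+1 {-2}H (ltnSn (size H)) F => // d IH H sizeH F H_nz FH.
have [/eqP/size_poly1P[c c_nz Hc]|] := eqVneq (size H) 1.
  by exists F, c; rewrite -Hc.
case/closed_rootP => s0 /(mixed_factorization_root FH)[F' [H' [HH' FH']]].
have H'_nz : H' != 0 by apply: contraNneq H_nz => H'0; rewrite HH' H'0 mul0r.
apply: (IH H' _ F' H'_nz FH').
move: sizeH; rewrite HH' size_mul ?expf_neq0 ?polyXsubC_eq0 // size_exp_XsubC.
rewrite addnS ltnS; apply: leq_trans; by rewrite addnS ltnS leq_addr.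
Qed.

End MixedMonomials.

Section PGLHomomorphisms.
Variables (k : closedFieldType) (n : nat).
Implicit Types g : k -> 'M[k]_n.+1.

Lemma PGL_morph_mixed g : PGL_morph g ->
  exists m : 'I_n.+1 -> 'I_n.+1 -> 'I_n.+1 -> 'I_n.+1 -> {poly k},
    forall a b i j s, mixed_monomial (g s) a b i j / \det (g s) = (m a b i j).[s].
Proof.
case=> _ g_mono; pose idx (x y l : 'I_n.+1) := if l == ord0 then x else y.
have prod_idx (A : 'M[k]_n.+1) a b i j :
    \prod_(l < n.+1) A (idx a i l) (idx b j l) = mixed_monomial A a b i j.
  by rewrite big_ord_recl /idx eqxx (eq_bigr (fun _ => A i j)) ?prodr_const ?card_ord.
have /polyfun_family[P PE] : forall x : 'I_n.+1 * 'I_n.+1 * 'I_n.+1 * 'I_n.+1,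
    polyfun (fun s => mixed_monomial (g s) x.1.1.1 x.1.1.2 x.1.2 x.2 / \det (g s)).
  move=> [[[a b] i] j]; have [p pE] := g_mono (idx a i) (idx b j).
  by exists p => s; rewrite -pE prod_idx.
by exists (fun a b i j => P (a, b, i, j)) => a b i j s; rewrite -PE.
Qed.

Lemma PGL_morph_polymx g : PGL_morph g ->
  exists F : 'M[{poly k}]_n.+1, forall s, proj_eq (evalmx F s) (g s).
Proof.
move=> g_morph; have [det_nz _] := g_morph; have [m mE] := PGL_morph_mixed g_morph.
have g_nz s : g s != 0 by apply: contraNneq (det_nz s) => ->; rewrite det0.
have m_diag s : exists i j, ~~ root (m i j i j) s.
  have [i [j gij]] := mx_neq0P (g_nz s); exists i, j.
  by rewrite /root -mE /mixed_monomial -exprS mulf_neq0 ?expf_neq0 ?invr_neq0.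
have [i0 [j0 m0]] := m_diag 0.
have H_nz : m i0 j0 i0 j0 ^+ n != 0.
  by rewrite expf_neq0 //; apply: contraNneq m0 => ->; rewrite root0.
have FH : mixed_factorization m (m i0 j0 i0 j0 ^+ n) (\matrix_(a, b) m a b i0 j0).
  move=> a b i j; apply: poly_eq_of_horner => s.
  rewrite /mixed_monomial !mxE !hornerM !horner_exp -!mE /mixed_monomial.
  by rewrite !expr_div_n !exprMn; ring.
have [F [c [c_nz Fc]]] := mixed_factorization_const m_diag H_nz FH.
exists F => s; apply: (@proj_eq_of_mixed_monomial _ _ _ _ (c / \det (g s))) => //.
  by rewrite mulf_neq0 ?invr_neq0.
move=> a b i j; have := congr1 (horner^~ s) (Fc a b i j).
rewrite /mixed_monomial hornerM horner_exp !evalmxE hornerCM -mE => ->; rewrite /mixed_monomial; ring.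
Qed.

Lemma evalmx_hom_of_proj (G : 'M[{poly k}]_n.+1) :
  evalmx G 0 = 1 -> (forall s, \det (evalmx G s) = 1) ->
  (forall s t, proj_eq (evalmx G (s + t)) (evalmx G s *m evalmx G t)) ->
  forall s t, evalmx G (s + t) = evalmx G s *m evalmx G t.
Proof.
move=> G0 det1 G_proj s t.
pose G_shift := map_mx (fun p => p \Po ('X + s%:P)) G.
pose G_mul := map_mx polyC (evalmx G s) *m G.
have G_shiftE u : evalmx G_shift u = evalmx G (s + u).
  by apply/matrixP => i j; rewrite !evalmxE mxE horner_comp !hornerE addrC.
have G_mulE u : evalmx G_mul u = evalmx G s *m evalmx G u.
  by rewrite /evalmx map_mxM -map_mx_comp map_mx_id // => p; rewrite /= horner_evalE hornerC.
have : G_shift = G_mul.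
  apply: (@polymx_eq_of_unity_ratio _ n.+1) => //.
  - move=> u; rewrite G_shiftE G_mulE; apply: proj_eq_det => //.
      by rewrite det_mulmx !det1 mulr1.
    by rewrite det_mulmx !det1 mulr1 oner_neq0.
  - by rewrite G_shiftE G_mulE addr0 G0 mulmx1.
  - rewrite G_shiftE addr0; apply/eqP => Gs0; have := det1 s.
    by rewrite Gs0 det0 => /esym/eqP; rewrite oner_eq0.
by move/(congr1 (fun P => evalmx P t)); rewrite G_shiftE G_mulE.
Qed.

Lemma Hom_Ga_PGL_lift g : Hom_Ga_PGL g ->
  exists f, Hom_Ga_GL f /\ forall s, proj_eq (f s) (g s).
Proof.
move=> [g_morph g_hom]; have [det_nz _] := g_morph.
have [F Fg] := PGL_morph_polymx g_morph.
have g0 : proj_eq (g 0) 1.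
  apply: proj_eq_idem_one; first by rewrite unitmxE unitfE det_nz.
  by have := g_hom 0 0; rewrite addr0.
have [mu [mu_nz F0]] := proj_eq_trans (Fg 0) g0.
pose G := mu^-1%:P *: F.
have GE s : evalmx G s = mu^-1 *: evalmx F s.
  by apply/matrixP => i j; rewrite !mxE !horner_evalE hornerCM.
have Gg s : proj_eq (evalmx G s) (g s).
  by apply: proj_eq_trans (Fg s); exists mu^-1; rewrite invr_neq0.
have G0 : evalmx G 0 = 1 by rewrite GE F0 scalerA mulVf // scale1r.
have detG_nz s : \det (evalmx G s) != 0.
  by have [c [c_nz ->]] := Gg s; rewrite detZ mulf_neq0 ?expf_neq0.
have detG s : \det (evalmx G s) = 1 by rewrite evalmx_det_const // G0 det1.
exists (evalmx G); split; last exact: Gg.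
split; first split=> //.
  split; first by move=> i j; exists (G i j) => s; rewrite evalmxE.
  by exists 1 => s; rewrite detG invr1 hornerC.
apply: evalmx_hom_of_proj => // s t.
apply: proj_eq_trans (Gg _) (proj_eq_trans (g_hom s t) _).
by apply: proj_eq_mul; apply: proj_eq_sym.
Qed.

End PGLHomomorphisms.

Theorem lemma1p6 (k : closedFieldType) (n : nat) (hn : (1 <= n)%N) :
  (forall f : k -> 'M[k]_n, Hom_Ga_GL f -> Hom_Ga_PGL f) /\
  (forall f1 f2 : k -> 'M[k]_n, Hom_Ga_GL f1 -> Hom_Ga_GL f2 ->
     (forall s, proj_eq (f1 s) (f2 s)) -> f1 = f2) /\
  (forall g : k -> 'M[k]_n, Hom_Ga_PGL g ->
     exists f : k -> 'M[k]_n, Hom_Ga_GL f /\ forall s, proj_eq (f s) (g s)).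
Proof.
case: n hn => // n _; split; [|split].
- exact: Hom_Ga_GL_PGL.
- exact: Hom_Ga_GL_proj_inj.
- exact: Hom_Ga_PGL_lift.
Qed.
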